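(* Let $\Gamma$ be a finite connected $(G,2)$-distance-transitive graph of square-free order, where $G$ is soluble, and let $F$ be the Fitting subgroup of $G$. If $|F|$ is square-free, then $F=C_G(F)$ is cyclic, and either $\Gamma\cong \mathrm{K}_{m[b]}$ with $m\ge3$, $b\ge2$ and $mb$ square-free, or $F$ is semiregular on $V(\Gamma)$ with at most $2$ orbits.
   Context: For $G\le\mathrm{Aut}(\Gamma)$, $\Gamma$ is $(G,2)$-distance-transitive if its diameter is at least $2$, $G$ is vertex-transitive and $G_u$ is transitive on $\Gamma(u)$ and $\Gamma_2(u)$ for every vertex $u$. The Fitting subgroup is the subgroup generated by all nilpotent normal subgroups. $\mathrm{K}_{m[b]}$ is the complete multipartite graph with $m$ parts of size $b$. *)

From mathcomp Require Import all_boot all_order all_fingroup all_solvable.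
Set Implicit Arguments. Unset Strict Implicit. Unset Printing Implicit Defensive.
Open Scope group_scope.

Definition simple_graph {V : finType} (e : rel V) : Prop :=
  symmetric e /\ irreflexive e.

Definition connected_graph {V : finType} (e : rel V) : Prop :=
  forall x y : V, connect e x y.

Definition squarefree (n : nat) : Prop :=
  0 < n /\ forall p : nat, prime p -> ~~ (p ^ 2 %| n).

Definition graph_aut_group {V : finType} (e : rel V) (G : {group {perm V}}) : Prop :=
  forall g, g \in G -> forall x y : V, e (g x) (g y) = e x y.

Definition nbhd {V : finType} (e : rel V) (u : V) : {set V} :=
  [set v | e u v].
Definition nbhd2 {V : finType} (e : rel V) (u : V) : {set V} :=
  [set v | [&& v != u, ~~ e u v & [exists w, e u w && e w v]]].

Definition diam_ge2 {V : finType} (e : rel V) : Prop :=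
  exists u v : V, v != u /\ ~~ e u v.

Definition two_distance_transitive {V : finType} (e : rel V)
    (G : {group {perm V}}) : Prop :=
  [/\ diam_ge2 e,
      [transitive G, on [set: V] | 'P] &
      forall u : V,
        [transitive 'C_G[u | 'P], on nbhd e u | 'P] /\
        [transitive 'C_G[u | 'P], on nbhd2 e u | 'P]].

Definition iso_complete_multipartite {V : finType} (e : rel V) (m b : nat) : Prop :=
  exists f : V -> 'I_m * 'I_b,
    bijective f /\ forall x y : V, e x y = ((f x).1 != (f y).1).

Definition semiregular_act {V : finType} (H : {set {perm V}}) : Prop :=
  forall v : V, 'C_H[v | 'P] = 1%g.

Definition num_orbits {V : finType} (H : {set {perm V}}) : nat :=
  #|orbit 'P H @: [set: V]|.

From mathcomp Require Import all_boot all_order all_fingroup all_solvable.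

(* Since G is soluble, C_G(F) <= F.  Being nilpotent of square-free order, F is
   cyclic, hence abelian, so F = C_G(F) and G/F embeds in the abelian group
   Aut(F); thus G' <= F.  For g in G_w and x = w^h this gives
   x^g = (w^g)^(h[h,g]) = x^[h,g], so G_w preserves every F-orbit.  Local
   transitivity then puts all neighbours of a vertex in one F-orbit, and by
   connectivity the F-orbits of the two ends of an edge cover V.  The
   stabilisers F_w are conjugate in G, hence equal as F is cyclic, hence
   trivial. *)

Set Implicit Arguments.
Unset Strict Implicit.
Local Open Scope group_scope.

Section FittingSubgroup.

Variable gT : finGroupType.
Implicit Types G H : {group gT}.

Lemma normal_sub_Fitting_der1 G H :
  H <| G -> H \subset 'C('F(G)) -> H^`(1) \subset 'F(G) -> H \subset 'F(G).
Proof.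
move=> nsHG cFH sH'F; apply: Fitting_max nsHG _.
apply: small_nil_class; apply: (@leq_trans 2) => //.
rewrite nil_class2 subsetI der_sub /= centsC.
exact: subset_trans cFH (centS sH'F).
Qed.

Lemma subcent_Fitting G : solvable G -> 'C_G('F(G)) \subset 'F(G).
Proof.
move=> solG; set C := 'C_G('F(G)).
have nsCG : C <| G.
  have := subcent_normal G 'F(G).
  by rewrite (setIidPl (normal_norm (Fitting_normal G))).
have der_step n : C^`(n.+1) \subset 'F(G) -> C^`(n) \subset 'F(G).
  apply: normal_sub_Fitting_der1 (char_normal_trans (der_char n C) nsCG) _.
  exact: subset_trans (der_sub n C) (subsetIr _ _).
have der_down k n : C^`(k + n) \subset 'F(G) -> C^`(n) \subset 'F(G).
  by elim: k n => // k IHk n; rewrite addSnnS => /IHk; apply: der_step.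
have [m C_m1] := derivedP _ (solvableS (subsetIl _ _) solG : solvable C).
by apply: (der_down m 0); rewrite addn0 C_m1 sub1G.
Qed.

Lemma Fitting_self_cent G :
  solvable G -> abelian 'F(G) -> 'C_G('F(G)) = 'F(G).
Proof.
move=> solG cFF; apply/eqP; rewrite eqEsubset subcent_Fitting //.
by rewrite subsetI Fitting_sub.
Qed.

Lemma nil_squarefree_cyclic G : nilpotent G -> squarefree #|G| -> cyclic G.
Proof.
move=> nilG [_ sqfG]; apply: nil_Zgroup_cyclic => //.
apply/forall_inP => P /SylowP[p p_pr sylP].
have [-> | ntP] := eqVneq P 1%G; first exact: cyclic1.
have [_ _ [k oP]] := pgroup_pdiv (pHall_pgroup sylP) ntP.
apply: prime_cyclic; rewrite oP.
case: k oP => // k oP; case/negP: (sqfG p p_pr).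
apply: dvdn_trans (cardSg (pHall_sub sylP)).
by rewrite oP (dvdn_exp2l p (_ : 2 <= k.+2)%N).
Qed.

Lemma der1_sub_cent_cyclic G H :
  cyclic H -> G \subset 'N(H) -> G^`(1) \subset 'C(H).
Proof.
move=> cycH nHG; rewrite -ker_conj_aut ker_trivg_morphim.
rewrite (subset_trans (der_sub 1 G) nHG) morphim_der //=.
have cAG : abelian (conj_aut H @* G).
  exact: abelianS (Aut_conj_aut H G) (Aut_cyclic_abelian cycH).
by rewrite (derG1P cAG).
Qed.

End FittingSubgroup.

Section Actions.

Variables (aT : finGroupType) (T : finType) (to : {action aT &-> T}).

Lemma stab_act_orbit (G N : {group aT}) (S : {set T}) w x g :
    [transitive G, on S | to] -> G^`(1) \subset N ->
    w \in S -> x \in S -> g \in 'C_G[w | to] ->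
  to x g \in orbit to N x.
Proof.
move=> trG sG'N Sw Sx /setIP[Gg /astab1P gw].
have /orbitP[h Gh <-] : x \in orbit to G w by rewrite (atransP trG w Sw).
rewrite -actM (commgC h g) (actM to w (g * h)) (actM to w g) gw.
by apply: mem_orbit; apply: (subsetP sG'N); apply: mem_commg.
Qed.

End Actions.

Lemma connect_neq_edge (T : finType) (e : rel T) a b :
  connect e a b -> b != a -> exists v, e a v.
Proof.
case/connectP => [[_ -> | v p /= /andP[av _] _]]; first by rewrite eqxx.
by exists v.
Qed.

Section PermGroups.

Variable T : finType.
Implicit Types G N : {group {perm T}}.

Lemma cyclic_normal_semiregular G N :
    [transitive G, on [set: T] | 'P] -> G \subset 'N(N) -> cyclic N ->
  semiregular_act N.
Proof.
move=> trG nNG cycN w; set K := 'C_N[w | 'P].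
apply/trivgP/subsetP => k Kk; rewrite inE; apply/eqP/permP => x; rewrite perm1.
have /orbitP[g Gg <-] : x \in orbit 'P G w by rewrite (atransP trG) ?inE.
have KgK : K :^ g = K.
  apply/eqP; rewrite -/((K :^ g)%G == K%G) (eq_subG_cyclic cycN) ?cardJg //=.
    by rewrite conjIg (normsP nNG g Gg) subsetIl.
  exact: subsetIl.
have : k \in K :^ g by rewrite KgK.
by rewrite conjIg -astab1_act => /setIP[_ /astab1P].
Qed.

Lemma num_orbits_le2 N a v :
  (forall x, x \in orbit 'P N a :|: orbit 'P N v) -> num_orbits N <= 2.
Proof.
move=> cover; apply: (@leq_trans #|[set orbit 'P N a; orbit 'P N v]|).
  apply: subset_leq_card; apply/subsetP => _ /imsetP[x _ ->].
  by rewrite !inE; case/setUP: (cover x) => /orbit_eqP ->; rewrite eqxx ?orbT.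
by rewrite cards2; case: (_ != _).
Qed.

End PermGroups.

Section LocallyOrbitalGraph.

Variables (V : finType) (e : rel V) (N : {group {perm V}}).
Hypotheses (e_sym : symmetric e) (e_conn : connected_graph e)
  (autN : graph_aut_group e N).
Hypothesis nbhd_orbit : forall w y y', e w y -> e w y' -> y' \in orbit 'P N y.

Lemma edge_orbits_closed a v :
  e a v -> closed e (mem (orbit 'P N a :|: orbit 'P N v)).
Proof.
move=> av.
have step x y : x \in orbit 'P N a :|: orbit 'P N v -> e x y ->
                y \in orbit 'P N a :|: orbit 'P N v.
  move=> /setUP[] /orbitP[f Nf <-] xy; apply/setUP.
    right; apply: orbit_trans (nbhd_orbit _ xy) (mem_orbit _ _ Nf).
    by rewrite autN.
  left; apply: orbit_trans (nbhd_orbit _ xy) (mem_orbit _ _ Nf).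
  by rewrite autN // e_sym.
by move=> x y xy; apply/idP/idP => /step; apply; rewrite // e_sym.
Qed.

Lemma edge_orbits_cover a v :
  e a v -> forall x, x \in orbit 'P N a :|: orbit 'P N v.
Proof.
move=> av x; rewrite -(closed_connect (edge_orbits_closed av) (e_conn a x)).
by rewrite inE orbit_refl.
Qed.

End LocallyOrbitalGraph.

Unset Implicit Arguments.

Theorem lemma4p5 (V : finType) (e : rel V) (G : {group {perm V}}) :
  simple_graph e ->
  connected_graph e ->
  graph_aut_group e G ->
  two_distance_transitive e G ->
  squarefree #|V| ->
  solvable G ->
  squarefree #|'F(G)| ->
  [/\ 'C_G('F(G)) = 'F(G)%g,
      cyclic 'F(G) &
      (exists m b : nat,
          [/\ 3 <= m, 2 <= b, squarefree (m * b) & iso_complete_multipartite e m b])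
      \/ (semiregular_act ('F(G)) /\ num_orbits ('F(G)) <= 2)].
Proof.
move=> [e_sym _] e_conn autG [[a [b [ba _]]] trG trG_nbhd] _ solG sqfF.
have nFG : G \subset 'N('F(G)) := normal_norm (Fitting_normal G).
have cycF : cyclic 'F(G) := nil_squarefree_cyclic (Fitting_nil G) sqfF.
have CF : 'C_G('F(G)) = 'F(G) := Fitting_self_cent solG (cyclic_abelian cycF).
have sG'F : G^`(1) \subset 'F(G).
  by rewrite -CF subsetI der_sub der1_sub_cent_cyclic.
have autF : graph_aut_group e 'F(G).
  by move=> f Ff; apply: autG; apply: (subsetP (Fitting_sub G)).
have nbhd_orbit w y y' : e w y -> e w y' -> y' \in orbit 'P 'F(G) y.
  move=> wy wy'; have [trGw _] := trG_nbhd w.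
  have /orbitP[g Gw_g <-] : y' \in orbit 'P 'C_G[w | 'P] y.
    by rewrite (atransP trGw) ?inE.
  by apply: stab_act_orbit trG sG'F _ _ Gw_g; rewrite inE.
have [v av] := connect_neq_edge (e_conn a b) ba.
split=> //; right; split; first exact: cyclic_normal_semiregular trG nFG cycF.
exact: num_orbits_le2 (edge_orbits_cover e_sym e_conn autF nbhd_orbit av).
Qed.
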